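(* Let $A,B,C$ be tridendriform algebras over a field $\mathbb{K}$. Then, under the canonical identification of $\overline{A}\otimes(\overline{B}\otimes\overline{C})$ with $(\overline{A}\otimes\overline{B})\otimes\overline{C}$, the tridendriform algebras $A\overline{\otimes}(B\overline{\otimes}C)$ and $(A\overline{\otimes}B)\overline{\otimes}C$ coincide: they have the same underlying subspace (spanned by the $a\otimes b\otimes c$, $a\in\overline A,b\in\overline B,c\in\overline C$, not all three equal to $1$) and the same three products.
   Context: A tridendriform algebra over $\mathbb{K}$ is a vector space $A$ with three bilinear products $\prec,\cdot,\succ$ such that, writing $a*b=a\prec b+a\cdot b+a\succ b$, for all $a,b,c\in A$: $(a\prec b)\prec c=a\prec(b*c)$, $(a\succ b)\prec c=a\succ(b\prec c)$, $(a*b)\succ c=a\succ(b\succ c)$, $(a\succ b)\cdot c=a\succ(b\cdot c)$, $(a\prec b)\cdot c=a\cdot(b\succ c)$, $(a\cdot b)\prec c=a\cdot(b\prec c)$, $(a\cdot b)\cdot c=a\cdot(b\cdot c)$. The augmentation of a tridendriform algebra $A$ is $\overline{A}=\mathbb{K}1\oplus A$, where $1$ is a unit for $*$, and for $a\in A$: $1\prec a=0$, $a\prec 1=a$, $1\succ a=a$, $a\succ 1=0$, $1\cdot a=a\cdot 1=0$. For tridendriform algebras $A,B$, $A\overline{\otimes}B:=(A\otimes B)\oplus(\mathbb{K}1\otimes B)\oplus(A\otimes\mathbb{K}1)\subseteq\overline A\otimes\overline B$, with products, for $\ltimes\in\{\prec,\cdot,\succ\}$: $(a\otimes 1)\ltimes(c\otimes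 1)=(a\ltimes c)\otimes 1$ for $a,c\in A$, and $(a\otimes b)\ltimes(c\otimes d)=(a*c)\otimes(b\ltimes d)$ whenever $b,d$ are not both equal to $1$ (augmented conventions). This is a tridendriform algebra, so $A\overline{\otimes}(B\overline{\otimes}C)$ and $(A\overline{\otimes}B)\overline{\otimes}C$ are defined (the augmentation of $B\overline\otimes C$ is identified with $\overline B\otimes\overline C$, its unit being $1\otimes 1$). *)

From HB Require Import structures.
From mathcomp Require Import all_boot all_order all_algebra.
Set Implicit Arguments. Unset Strict Implicit. Unset Printing Implicit Defensive.
Import GRing.Theory.
Local Open Scope ring_scope.

Inductive top := Prec | Dot | Succ.

Section TD.
Variable K : fieldType.

Record tridend := Tridend {
  td_car :> lmodType K;
  td_op : top -> td_car -> td_car -> td_car;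
  td_linl : forall o (k : K) x x' y, td_op o (k *: x + x') y = k *: td_op o x y + td_op o x' y;
  td_linr : forall o (k : K) x y y', td_op o x (k *: y + y') = k *: td_op o x y + td_op o x y';
  td_ax1 : forall a b c, td_op Prec (td_op Prec a b) c
     = td_op Prec a (td_op Prec b c + td_op Dot b c + td_op Succ b c);
  td_ax2 : forall a b c, td_op Prec (td_op Succ a b) c = td_op Succ a (td_op Prec b c);
  td_ax3 : forall a b c, td_op Succ (td_op Prec a b + td_op Dot a b + td_op Succ a b) c
     = td_op Succ a (td_op Succ b c);
  td_ax4 : forall a b c, td_op Dot (td_op Succ a b) c = td_op Succ a (td_op Dot b c);
  td_ax5 : forall a b c, td_op Dot (td_op Prec a b) c = td_op Dot a (td_op Succ b c);
  td_ax6 : forall a b c, td_op Prec (td_op Dot a b) c = td_op Dot a (td_op Prec b c);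
  td_ax7 : forall a b c, td_op Dot (td_op Dot a b) c = td_op Dot a (td_op Dot b c)
}.

Definition td_star (A : tridend) (a b : A) : A :=
  td_op Prec a b + td_op Dot a b + td_op Succ a b.

(* Augmentation Abar = K 1 (+) A, as the K-vector space K x A. *)
Definition Abar (A : tridend) : lmodType K := (K^o * td_car A)%type.
Definition one (A : tridend) : Abar A := (1, 0).
Definition emb (A : tridend) (a : A) : Abar A := (0, a).

(* Generators of Abar: an element of A or the unit 1 (encoded by None). *)
Definition inj (A : tridend) (x : option A) : Abar A :=
  if x is Some a then emb a else one A.

Definition ostar (A : tridend) (x y : option A) : option A :=
  match x, y with
  | None, _ => y
  | _, None => x
  | Some a, Some b => Some (td_star a b)
  end.

(* Augmented products with at least one argument in A (value in A):
   1 < a = 0, a < 1 = a, 1 > a = a, a > 1 = 0, 1 . a = a . 1 = 0.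
   (The case 1 (op) 1 is undefined and never used; it is set to 0.) *)
Definition aop (A : tridend) (o : top) (x y : option A) : A :=
  match x, y with
  | Some a, Some b => td_op o a b
  | None, Some b => if o is Succ then b else 0
  | Some a, None => if o is Prec then a else 0
  | None, None => 0
  end.

(* Tensors are handled through test maps: an element of a tensor product
   is known through its images under all multilinear maps.  Here
   sigma : Abar X -> Abar Y -> W is a bilinear map, and
   tens_op o sigma u u' is the image under (the linear map induced by) sigma
   of the product  u (op) u'  in the augmentation of X (x)bar Y, where
   u = x (x) y is a generator encoded by a pair of options
   ((None,None) = 1 (x) 1 is the unit). *)
Definition tens_op (X Y : tridend) (W : lmodType K) (o : top)
    (sigma : Abar X -> Abar Y -> W)
    (u u' : option X * option Y) : W :=
  match u, u' with
  | (None, None), (None, None) => 0 (* undefined, never used *)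
  | (None, None), (b', c') => if o is Succ then sigma (inj b') (inj c') else 0
  | (b, c), (None, None) => if o is Prec then sigma (inj b) (inj c) else 0
  | (b, c), (b', c') =>
      match c, c' with
      | None, None => sigma (emb (aop o b b')) (one Y)
      | _, _ => sigma (inj (ostar b b')) (emb (aop o c c'))
      end
  end.

Definition tens_star (X Y : tridend) (W : lmodType K)
    (sigma : Abar X -> Abar Y -> W) (u u' : option X * option Y) : W :=
  match u, u' with
  | (None, None), (None, None) => sigma (one X) (one Y)
  | _, _ => tens_op Prec sigma u u' + tens_op Dot sigma u u' + tens_op Succ sigma u u'
  end.

Definition trilinear (A B C : tridend) (W : lmodType K)
    (tau : Abar A -> Abar B -> Abar C -> W) : Prop :=
  [/\ forall (k : K) x x' y z, tau (k *: x + x') y z = k *: tau x y z + tau x' y z,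
      forall (k : K) x y y' z, tau x (k *: y + y') z = k *: tau x y z + tau x y' z
    & forall (k : K) x y z z', tau x y (k *: z + z') = k *: tau x y z + tau x y z'].

(* Image under tau of the product (op) in A (x)bar (B (x)bar C) of the
   generators a (x) (b (x) c) and a' (x) (b' (x) c') (not equal to 1 (x) 1 (x) 1). *)
Definition left_prod (A B C : tridend) (W : lmodType K)
    (tau : Abar A -> Abar B -> Abar C -> W) (o : top)
    (x y : option A * (option B * option C)) : W :=
  let: (a, u) := x in let: (a', u') := y in
  match u, u' with
  | (None, None), (None, None) => tau (emb (aop o a a')) (one B) (one C)
  | _, _ => tens_op o (tau (inj (ostar a a'))) u u'
  end.

(* Image under tau of the product (op) in (A (x)bar B) (x)bar C of the
   generators (a (x) b) (x) c and (a' (x) b') (x) c'. *)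
Definition right_prod (A B C : tridend) (W : lmodType K)
    (tau : Abar A -> Abar B -> Abar C -> W) (o : top)
    (x y : (option A * option B) * option C) : W :=
  let: (v, c) := x in let: (v', c') := y in
  match c, c' with
  | None, None => tens_op o (fun p q => tau p q (one C)) v v'
  | _, _ => tens_star (fun p q => tau p q (emb (aop o c c'))) v v'
  end.

Definition is_unit3 (A B C : tridend) (a : option A) (b : option B) (c : option C) : bool :=
  match a, b, c with None, None, None => true | _, _, _ => false end.

End TD.

From mathcomp Require Import all_boot all_order all_algebra.
Import GRing.Theory.
Set Implicit Arguments. Unset Strict Implicit. Unset Printing Implicit Defensive.
Local Open Scope ring_scope.

(* Writing x = a (x) b (x) c and x' = a' (x) b' (x) c', both bracketings give
   x (op) x' = (a * a') (x) (b * b') (x) (c (op) c')   if c or c' is not 1,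
             = (a * a') (x) (b (op) b') (x) 1          if c = c' = 1 but b or b' is not 1,
             = (a (op) a') (x) 1 (x) 1                  otherwise.
   The only input is that in an augmented algebra the three products of
   generators add up to *, so that the augmented * of X (x)bar Y is
   (b * b') (x) (c * c'). *)

Section Augmentation.
Variables (K : fieldType) (A : tridend K).

Lemma embD : {morph @emb K A : x y / x + y}.
Proof. by move=> x y; rewrite /emb; congr (_, _); rewrite addr0. Qed.

Lemma emb_aop_sum (x y : option A) : x || y ->
  emb (aop Prec x y + aop Dot x y + aop Succ x y) = inj (ostar x y).
Proof. by case: x y => [x|] [y|] //=; rewrite ?addr0 ?add0r. Qed.

End Augmentation.

Section TensorProduct.
Variables (K : fieldType) (X Y : tridend K) (W : lmodType K).
Variable sigma : Abar X -> Abar Y -> W.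
Hypothesis sigmaDl : forall y, {morph sigma^~ y : x x' / x + x'}.
Hypothesis sigmaDr : forall x, {morph sigma x : y y' / y + y'}.

Lemma sigma0l y : sigma 0 y = 0.
Proof. by apply: (@addrI _ (sigma 0 y)); rewrite -sigmaDl !addr0. Qed.

Lemma sigma0r x : sigma x 0 = 0.
Proof. by apply: (@addrI _ (sigma x 0)); rewrite -sigmaDr !addr0. Qed.

(* The augmentation rules for 1 (op) a and a (op) 1 make the cases where one
   factor is the unit 1 (x) 1 fit the general formula. *)
Lemma tens_opE (o : top) (b b' : option X) (c c' : option Y) :
  tens_op o sigma (b, c) (b', c') =
  if (c, c') is (None, None) then sigma (emb (aop o b b')) (one Y)
  else sigma (inj (ostar b b')) (emb (aop o c c')).
Proof.
by case: o b b' c c' => [] [b|] [b'|] [c|] [c'|] //=; rewrite ?sigma0l ?sigma0r.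
Qed.

Lemma tens_starE (b b' : option X) (c c' : option Y) :
  tens_star sigma (b, c) (b', c') = sigma (inj (ostar b b')) (inj (ostar c c')).
Proof.
have [nonunit | ] := boolP [|| b, c, b' | c']; last first.
  by case: b b' c c' => [?|] [?|] [?|] [?|].
have -> : tens_star sigma (b, c) (b', c') =
    tens_op Prec sigma (b, c) (b', c') + tens_op Dot sigma (b, c) (b', c')
    + tens_op Succ sigma (b, c) (b', c').
  by move: nonunit; case: b b' c c' => [?|] [?|] [?|] [?|].
rewrite !tens_opE; have [some_cc' | /norP[]] := boolP (c || c').
  rewrite -(emb_aop_sum some_cc') !embD !sigmaDr.
  by case: c c' {nonunit} some_cc' => [?|] [?|].
case: c c' nonunit => [?|] [?|] //; rewrite !orbF => some_bb' _ _.
by rewrite -(emb_aop_sum some_bb') !embD !sigmaDl.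
Qed.
End TensorProduct.

Section ThreeFactors.
Variables (K : fieldType) (A B C : tridend K) (W : lmodType K).
Variable tau : Abar A -> Abar B -> Abar C -> W.
Hypothesis tau_trilinear : trilinear tau.

Lemma trilinearD1 y z : {morph (fun x => tau x y z) : x x' / x + x'}.
Proof. by case: tau_trilinear => D _ _ x x'; have := D 1 x x' y z; rewrite !scale1r. Qed.

Lemma trilinearD2 x z : {morph (fun y => tau x y z) : y y' / y + y'}.
Proof. by case: tau_trilinear => _ D _ y y'; have := D 1 x y y' z; rewrite !scale1r. Qed.

Lemma trilinearD3 x y : {morph tau x y : z z' / z + z'}.
Proof. by case: tau_trilinear => _ _ D z z'; have := D 1 x y z z'; rewrite !scale1r. Qed.

Definition tens3_op (o : top) (a a' : option A) (b b' : option B) (c c' : option C) : W :=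
  if (c, c') is (None, None) then
    if (b, b') is (None, None) then tau (emb (aop o a a')) (one B) (one C)
    else tau (inj (ostar a a')) (emb (aop o b b')) (one C)
  else tau (inj (ostar a a')) (inj (ostar b b')) (emb (aop o c c')).

Lemma left_prodE o a a' b b' c c' :
  left_prod tau o (a, (b, c)) (a', (b', c')) = tens3_op o a a' b b' c c'.
Proof.
have [nonunit | ] := boolP [|| b, c, b' | c']; last first.
  by case: b b' c c' => [?|] [?|] [?|] [?|].
have -> : left_prod tau o (a, (b, c)) (a', (b', c')) =
    tens_op o (tau (inj (ostar a a'))) (b, c) (b', c').
  by move: nonunit; case: b b' c c' => [?|] [?|] [?|] [?|].
rewrite tens_opE; [| exact: trilinearD2 | exact: trilinearD3].
by move: nonunit; rewrite /tens3_op; case: b b' c c' => [?|] [?|] [?|] [?|].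
Qed.

Lemma right_prodE o a a' b b' c c' :
  right_prod tau o ((a, b), c) ((a', b'), c') = tens3_op o a a' b b' c c'.
Proof.
rewrite /right_prod /tens3_op; case: c c' => [c|] [c'|]; cbv beta iota.
1-3: by rewrite tens_starE => // ?; [apply: trilinearD1 | apply: trilinearD2].
by rewrite tens_opE => // ?; [apply: trilinearD1 | apply: trilinearD2].
Qed.
End ThreeFactors.

Theorem mainTheorem4 (K : fieldType) (A B C : tridend K) (W : lmodType K)
    (tau : Abar A -> Abar B -> Abar C -> W) (Htau : trilinear tau)
    (o : top) (a a' : option A) (b b' : option B) (c c' : option C) :
  ~~ is_unit3 a b c -> ~~ is_unit3 a' b' c' ->
  left_prod tau o (a, (b, c)) (a', (b', c')) =
  right_prod tau o ((a, b), c) ((a', b'), c').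
Proof.
(* The undefined product 1 (op) 1 gets the value 0 on both sides. *)
by move=> _ _; rewrite (left_prodE Htau) (right_prodE Htau).
Qed.
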